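(* Let $B_1,\dots,B_N$ be training bags, $B_i=[B_{i1},\dots,B_{iN_i}]$ with $B_{ij}\in\mathbb{R}^d$, let $\ker$ be a kernel function with feature map $\Phi$, and let $\nu\in(0,1)$. Let $\lambda$ be a minimizer of $$\sum_{i=1}^N\Big\|\sum_{j=1}^{N_i}\lambda_{ij}\Phi(B_{ij})-\frac1N\sum_{k=1}^N\sum_{j=1}^{N_k}\lambda_{kj}\Phi(B_{kj})\Big\|^2\quad\text{s.t. } \sum_{j}\lambda_{ij}=1,\ \lambda_{ij}\ge 0,$$ let $b_i=\sum_j\lambda_{ij}\Phi(B_{ij})$ be the virtual instances, with $\ker(b_i,b_j)=\sum_{k=1}^{N_i}\sum_{r=1}^{N_j}\lambda_{ik}\lambda_{jr}\ker(B_{ik},B_{jr})$, and let $\alpha$ solve $$\min_\alpha \tfrac12\sum_{i,j}\alpha_i\alpha_j\ker(b_i,b_j)\quad\text{s.t. } 0\le\alpha_i\le\frac{1}{\nu N},\ \sum_i\alpha_i=1,$$ with $\rho=\sum_i\alpha_i\ker(b_i,b_j)$ for an index $j$ with $0<\alpha_j<\frac1{\nu N}$. Define $l(x)=\sum_{j=1}^N\alpha_j\sum_{k=1}^{N_j}\lambda_{jk}\ker(x,B_{jk})-\rho$ for an instance $x$, $f(x)=\operatorname{sign}(l(x))$, and $f(b_i)=\operatorname{sign}(\sum_j\alpha_j\ker(b_i,b_j)-\rho)$. If $\rho\neq 0$ and $\max_{j=1,\dots,N_i} f(B_{ij})=f(b_i)$ for all $i=1,\dots,N$, then $\nu$ is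 an upper bound on the fraction of outlier bags, i.e. $|\{i:\alpha_i=\frac1{\nu N}\}|\le \nu N$.
   Context: $\operatorname{sign}(y)=+1$ if $y\ge 0$ and $-1$ otherwise. A bag $B_i$ is called an outlier bag if $\alpha_i=\frac{1}{\nu N}$ (and a support bag if $0<\alpha_i<\frac1{\nu N}$). The kernel satisfies $\ker(x,y)=\Phi(x)\cdot\Phi(y)$. *)

From HB Require Import structures.
From mathcomp Require Import all_boot all_order all_algebra.
Set Implicit Arguments. Unset Strict Implicit. Unset Printing Implicit Defensive.
Import Order.TTheory GRing.Theory Num.Theory.
Local Open Scope ring_scope.

Definition sgn {R : realFieldType} (y : R) : R := if 0 <= y then 1 else -1.

Definition inner_product {R : realFieldType} {H : lmodType R} (ip : H -> H -> R) : Prop :=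
  (forall u v, ip u v = ip v u) /\
  (forall a u v w, ip (a *: u + v) w = a * ip u w + ip v w) /\
  (forall u, 0 <= ip u u).

Section MIOCSVM.
Variables (R : realFieldType) (H : lmodType R) (ip : H -> H -> R)
  (d N : nat) (Ns : 'I_N -> nat) (Phi : 'rV[R]_d -> H).

Definition wcomb (B : forall i : 'I_N, 'I_(Ns i) -> 'rV[R]_d)
  (lam : forall i : 'I_N, 'I_(Ns i) -> R) (i : 'I_N) : H :=
  \sum_(j < Ns i) lam i j *: Phi (B i j).

Definition lam_obj (B : forall i : 'I_N, 'I_(Ns i) -> 'rV[R]_d)
  (lam : forall i : 'I_N, 'I_(Ns i) -> R) : R :=
  \sum_(i < N)
    (let v := wcomb B lam i - N%:R^-1 *: \sum_(k < N) wcomb B lam k in ip v v).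

Definition lam_feasible (lam : forall i : 'I_N, 'I_(Ns i) -> R) : Prop :=
  forall i, \sum_(j < Ns i) lam i j = 1 /\ forall j, 0 <= lam i j.

Definition kb (ker : 'rV[R]_d -> 'rV[R]_d -> R) (B : forall i : 'I_N, 'I_(Ns i) -> 'rV[R]_d)
  (lam : forall i : 'I_N, 'I_(Ns i) -> R) (i j : 'I_N) : R :=
  \sum_(k < Ns i) \sum_(r < Ns j) lam i k * lam j r * ker (B i k) (B j r).

Definition alpha_feasible (nu : R) (al : 'I_N -> R) : Prop :=
  (forall i, 0 <= al i <= (nu * N%:R)^-1) /\ \sum_(i < N) al i = 1.

Definition alpha_obj (K : 'I_N -> 'I_N -> R) (al : 'I_N -> R) : R :=
  2^-1 * \sum_(i < N) \sum_(j < N) al i * al j * K i j.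

Definition lval (ker : 'rV[R]_d -> 'rV[R]_d -> R) (B : forall i : 'I_N, 'I_(Ns i) -> 'rV[R]_d)
  (lam : forall i : 'I_N, 'I_(Ns i) -> R) (al : 'I_N -> R) (rho : R) (x : 'rV[R]_d) : R :=
  \sum_(j < N) al j * \sum_(k < Ns j) lam j k * ker x (B j k) - rho.

End MIOCSVM.

From HB Require Import structures.
From mathcomp Require Import all_boot all_order all_algebra.
Import Order.TTheory GRing.Theory Num.Theory.
Local Open Scope ring_scope.

(* The bound is the nu-property of one-class SVMs and uses only the
   feasibility of alpha: every outlier bag carries the full weight
   1/(nu N), the weights are nonnegative and sum to 1, so there are at
   most nu N outlier bags. *)

Section LevelSetCount.
Context {R : realFieldType} {I : finType} {a : I -> R}.
Hypothesis a_ge0 : forall i, 0 <= a i.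

Lemma card_level_mul_le_sum (c : R) :
  #|[set i | a i == c]|%:R * c <= \sum_i a i.
Proof.
have -> : #|[set i | a i == c]|%:R * c = \sum_(i in [set i | a i == c]) a i.
  rewrite -sum1_card natr_sum mulr_suml; apply: eq_bigr => i.
  by rewrite inE => /eqP ->; rewrite mul1r.
rewrite [X in _ <= X](bigID (mem [set i | a i == c])) /= lerDl.
exact: sumr_ge0.
Qed.

Lemma card_level_le_sum_div {c : R} : 0 < c ->
  #|[set i | a i == c]|%:R <= (\sum_i a i) / c.
Proof. by move=> c_gt0; rewrite ler_pdivlMr //; exact: card_level_mul_le_sum. Qed.

End LevelSetCount.

Lemma alpha_feasible_N_gt0 {R : realFieldType} {N : nat} {nu : R}
    {al : 'I_N -> R} :
  alpha_feasible nu al -> (0 < N)%N.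
Proof.
case: N al => // al [_ al_sum1].
by move: al_sum1; rewrite big_ord0 => /eqP; rewrite eq_sym oner_eq0.
Qed.

Theorem theorem1 (R : realFieldType) (H : lmodType R) (ip : H -> H -> R)
  (d N : nat) (Ns : 'I_N -> nat)
  (B : forall i : 'I_N, 'I_(Ns i) -> 'rV[R]_d)
  (ker : 'rV[R]_d -> 'rV[R]_d -> R) (Phi : 'rV[R]_d -> H) (nu : R)
  (lam : forall i : 'I_N, 'I_(Ns i) -> R) (alpha : 'I_N -> R) (rho : R) :
  inner_product ip ->
  (forall x y, ker x y = ip (Phi x) (Phi y)) ->
  0 < nu < 1 ->
  (* lam minimizes the virtual-instance objective *)
  lam_feasible lam ->
  (forall mu, lam_feasible mu -> lam_obj ip Phi B lam <= lam_obj ip Phi B mu) ->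
  (* alpha solves the dual QP on the virtual instances *)
  alpha_feasible nu alpha ->
  (forall beta, alpha_feasible nu beta ->
     alpha_obj (kb ker B lam) alpha <= alpha_obj (kb ker B lam) beta) ->
  (* rho computed from a support bag *)
  (exists j : 'I_N, 0 < alpha j < (nu * N%:R)^-1 /\
     rho = \sum_(i < N) alpha i * kb ker B lam i j) ->
  rho != 0 ->
  (forall i : 'I_N,
     \big[Num.max/-1]_(j < Ns i) sgn (lval ker B lam alpha rho (B i j)) =
     sgn (\sum_(j < N) alpha j * kb ker B lam i j - rho)) ->
  (#|[set i : 'I_N | alpha i == (nu * N%:R)^-1]|)%:R <= nu * N%:R.
Proof.
move=> _ _ /andP[nu_gt0 _] _ _ alpha_feas _ _ _ _.
have N_gt0 := alpha_feasible_N_gt0 alpha_feas.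
have [alpha_box alpha_sum1] := alpha_feas.
have alpha_ge0 i : 0 <= alpha i by case/andP: (alpha_box i).
have outlier_weight_gt0 : 0 < (nu * N%:R)^-1.
  by rewrite invr_gt0 mulr_gt0 // ltr0n.
have := card_level_le_sum_div alpha_ge0 outlier_weight_gt0.
by rewrite alpha_sum1 div1r invrK.
Qed.
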